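(* Let $h:\mathbb{R}\to\mathbb{R}$ be $h(x):=\big(\frac{\sin(\pi x)}{\pi x}\big)^2$ (with $h(0)=1$), and let $r\ge1$. Then, considering the following functions of $x$ on the interval $[0,1]$: (i) $h(x)+h(x-1)$ has a global minimum at $x=\tfrac12$; (ii) for every $m=1,2,3,\dots$, $h(x+m)+h(x-(m+1))$ has a global maximum at $x=\tfrac12$; (iii) $h(x)+h(x-1)-\big(h(x)^r+h(x-1)^r\big)^{1/r}$ has a global maximum at $x=\tfrac12$; (iv) for every $m=1,2,3,\dots$, $\big(h(x+m)+h(x-(m+1))\big)^r-h(x+m)^r-h(x-(m+1))^r$ has a global maximum at $x=\tfrac12$.
   Context: $h$ is understood as its continuous extension at $x=0$, i.e. $h(0)=1$. *)

From Stdlib Require Import Reals.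
Open Scope R_scope.

Definition h (x : R) : R :=
  if Req_EM_T x 0 then 1 else (sin (PI * x) / (PI * x)) ^ 2.

Definition rpow (a r : R) : R :=
  if Req_EM_T a 0 then 0 else Rpower a r.

Definition is_global_max_on01 (f : R -> R) (x0 : R) : Prop :=
  0 <= x0 <= 1 /\ forall x, 0 <= x <= 1 -> f x <= f x0.
Definition is_global_min_on01 (f : R -> R) (x0 : R) : Prop :=
  0 <= x0 <= 1 /\ forall x, 0 <= x <= 1 -> f x0 <= f x.

From Stdlib Require Import Reals Lra Psatz.
From Coquelicot Require Import Coquelicot.
Open Scope R_scope.

(* Write [x = 1/2 + d] with [|d| <= 1/2] and [M = m + 1/2]. The two arguments of
   [h] then sit at [M + d] and [M - d] and share the numerator
   [sin (PI (M +- d))^2 = cos (PI d)^2], so [h (M+d) + h (M-d) - 2 h M] has the sign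
   of [cos (PI d)^2 (M^2 + d^2) M^2 - (M^2 - d^2)^2]. Taylor bounds for sin and cos
   (with [3.14 <= PI <= 3.143] from Machin's formula) make this nonnegative for
   [M = 1/2] and nonpositive for [M >= 3/2], which gives (i) and (ii); they also give
   [cos (PI d)^2 <= 1 - 4 d^2], i.e. [h (1/2+d) h (1/2-d) <= h (1/2)^2].
   Part (iii) then follows from [a + b - (a^r + b^r)^(1/r) <= (2 - 2^(1/r)) sqrt (a b)],
   proved by writing [(a, b) = e^mu (e^y, e^-y)] and showing that the defect decreases
   in [y]. Part (iv) follows from (ii) and the power-mean bound
   [(a+b)^r - a^r - b^r <= (1 - 2^(1-r)) (a+b)^r], whose right side increases with
   [a + b]. *)

Lemma PI_bounds : 3.14 <= PI <= 3.143.
Proof.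
  destruct (PI_2_3_7_ineq 1) as [Hlo Hhi].
  unfold tg_alt, PI_2_3_7_tg, Ratan_seq in Hlo, Hhi; simpl in Hlo, Hhi; lra.
Qed.

Lemma PI_sqr_bounds : 9.85 <= PI ^ 2 <= 9.88.
Proof. pose proof PI_bounds; simpl; split; nra. Qed.

Lemma sin_sq_ge_cubic t : 0 <= t <= PI / 2 -> (t - t ^ 3 / 6) ^ 2 <= sin t ^ 2.
Proof.
  intros Ht; pose proof PI_bounds.
  destruct (sin_bound t 0) as [Hs _]; [lra | lra |].
  unfold sin_approx, sin_term in Hs; simpl in Hs.
  assert (0 <= t - t ^ 3 / 6) by (simpl; nra).
  apply pow_incr; lra.
Qed.

Lemma sin_sq_le t : 0 <= t <= PI -> sin t ^ 2 <= t ^ 2.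
Proof.
  intros Ht; destruct (Req_dec t 0) as [-> | Ht0]; [rewrite sin_0; lra |].
  apply pow_incr; split; [apply sin_ge_0 | left; apply sin_lt_x]; lra.
Qed.

Lemma cos_ge_quadratic t : - PI / 2 <= t <= PI / 2 -> 1 - t ^ 2 / 2 <= cos t.
Proof.
  intros Ht; destruct (cos_bound t 0) as [Hc _]; [lra | lra |].
  unfold cos_approx, cos_term in Hc; simpl in Hc; simpl; lra.
Qed.

Lemma sin_sq_Rabs t : sin t ^ 2 = sin (Rabs t) ^ 2.
Proof.
  destruct (Rle_dec 0 t); [now rewrite Rabs_pos_eq |].
  rewrite Rabs_left, sin_neg by lra; ring.
Qed.

Lemma cos_pi_sq_as_sin d : cos (PI * d) ^ 2 = sin (PI * (1 / 2 - Rabs d)) ^ 2.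
Proof.
  replace (PI * (1 / 2 - Rabs d)) with (PI / 2 - PI * Rabs d) by field.
  rewrite sin_shift; destruct (Rle_dec 0 d); [now rewrite Rabs_pos_eq |].
  rewrite Rabs_left, <- cos_neg by lra; f_equal; f_equal; ring.
Qed.

Lemma cos_pi_sq_le_taylor d : - 1 / 2 <= d <= 1 / 2 ->
  cos (PI * d) ^ 2 <= 1 - PI ^ 2 * d ^ 2 * (1 - PI ^ 2 * d ^ 2 / 6) ^ 2.
Proof.
  intros Hd; pose proof PI_bounds.
  assert (Habs : Rabs (PI * d) = PI * Rabs d)
    by (rewrite Rabs_mult, Rabs_pos_eq by lra; reflexivity).
  assert (Hd' : 0 <= Rabs d <= 1 / 2) by (split; [apply Rabs_pos | apply Rabs_le; lra]).
  pose proof (sin_sq_ge_cubic (Rabs (PI * d))) as Hs.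
  rewrite <- sin_sq_Rabs, Habs in Hs.
  replace (PI ^ 2 * d ^ 2 * (1 - PI ^ 2 * d ^ 2 / 6) ^ 2)
    with ((PI * Rabs d - (PI * Rabs d) ^ 3 / 6) ^ 2) by (rewrite <- (pow2_abs d); field).
  pose proof (sin2_cos2 (PI * d)); unfold Rsqr in *; simpl in *.
  assert (Hs' : PI * Rabs d <= PI / 2) by nra.
  specialize (Hs ltac:(split; [apply Rmult_le_pos |]; lra)); lra.
Qed.

Lemma cos_pi_sq_near_end d : 1 / 16 <= d ^ 2 -> - 1 / 2 <= d <= 1 / 2 ->
  let x := 1 / 2 - Rabs d in
  0 <= x <= 1 / 4 /\ 1 - 4 * d ^ 2 = 4 * x * (1 - x) /\ cos (PI * d) ^ 2 = sin (PI * x) ^ 2.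
Proof.
  intros Hu Hd x; pose proof (pow2_abs d); pose proof (Rabs_pos d).
  assert (Rabs d <= 1 / 2) by (apply Rabs_le; lra).
  assert (1 / 4 <= Rabs d) by nra.
  repeat split; unfold x; try lra.
  apply cos_pi_sq_as_sin.
Qed.

Lemma cos_pi_sq_le_parabola d : - 1 / 2 <= d <= 1 / 2 -> cos (PI * d) ^ 2 <= 1 - 4 * d ^ 2.
Proof.
  intros Hd; pose proof PI_sqr_bounds; pose proof PI_bounds.
  destruct (Rle_dec (d ^ 2) (1 / 16)) as [Hu | Hu].
  - pose proof (cos_pi_sq_le_taylor d Hd).
    assert (0 <= d ^ 2) by (simpl; nra).
    assert (4 <= PI ^ 2 * (1 - PI ^ 2 * d ^ 2 / 6) ^ 2) by nra.
    nra.
  - destruct (cos_pi_sq_near_end d ltac:(lra) Hd) as (Hx & Hpar & ->).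
    set (x := 1 / 2 - Rabs d) in *.
    pose proof (sin_sq_le (PI * x) ltac:(split; nra)).
    simpl in *; nra.
Qed.

Lemma cos_pi_sq_pair_ge d : - 1 / 2 <= d <= 1 / 2 ->
  (1 - 4 * d ^ 2) ^ 2 <= cos (PI * d) ^ 2 * (1 + 4 * d ^ 2).
Proof.
  intros Hd; pose proof PI_sqr_bounds; pose proof PI_bounds.
  destruct (Rle_dec (d ^ 2) (1 / 16)) as [Hu | Hu].
  - set (P := PI ^ 2) in *; set (u := d ^ 2) in *.
    assert (Hu0 : 0 <= u) by (unfold u; simpl; nra).
    pose proof (cos_ge_quadratic (PI * d) ltac:(split; nra)) as Hc.
    replace ((PI * d) ^ 2) with (P * u) in Hc by (unfold P, u; ring).
    assert (Hc2 : (1 - P * u / 2) ^ 2 <= cos (PI * d) ^ 2) by (apply pow_incr; nra).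
    assert ((1 - 4 * u) ^ 2 <= (1 - P * u / 2) ^ 2 * (1 + 4 * u)).
    { assert (E : (1 - P * u / 2) ^ 2 * (1 + 4 * u) - (1 - 4 * u) ^ 2
                  = u * ((12 - P) + u * (P * P / 4 - 4 * P - 16) + P * P * u * u)) by field.
      assert (- 32 <= P * P / 4 - 4 * P - 16) by nra.
      assert (0 <= (12 - P) + u * (P * P / 4 - 4 * P - 16) + P * P * u * u) by nra.
      nra. }
    nra.
  - destruct (cos_pi_sq_near_end d ltac:(lra) Hd) as (Hx & Hpar & ->).
    set (x := 1 / 2 - Rabs d) in *.
    replace (1 + 4 * d ^ 2) with (2 * (1 - x) ^ 2 + 2 * x ^ 2) by lra.
    rewrite Hpar.
    pose proof (sin_sq_ge_cubic (PI * x) ltac:(split; nra)) as Hs.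
    set (K := PI ^ 2 * (1 - PI ^ 2 * x ^ 2 / 6) ^ 2).
    replace ((PI * x - (PI * x) ^ 3 / 6) ^ 2) with (K * x ^ 2) in Hs by (unfold K; field).
    assert (HK : 8 <= K * (1 + x ^ 2)).
    { assert (0.8 <= 1 - PI ^ 2 * x ^ 2 / 6) by (simpl; nra).
      assert (1 - PI ^ 2 * x ^ 2 / 3 <= (1 - PI ^ 2 * x ^ 2 / 6) ^ 2) by nra.
      assert (0.84 <= (1 - PI ^ 2 * x ^ 2 / 3) * (1 + x ^ 2)) by (simpl; nra).
      unfold K; simpl in *; nra. }
    assert (16 * (1 - x) ^ 2 <= K * (2 * (1 - x) ^ 2 + 2 * x ^ 2)).
    { assert (0 <= K) by (unfold K; apply Rmult_le_pos; [lra | apply pow2_ge_0]).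
      assert (x ^ 2 * (1 - x) ^ 2 <= x ^ 2) by (simpl; nra).
      nra. }
    assert (0 <= x ^ 2) by apply pow2_ge_0.
    replace ((4 * x * (1 - x)) ^ 2) with (x ^ 2 * (16 * (1 - x) ^ 2)) by ring.
    nra.
Qed.

Lemma cos_pi_sq_pair_le M d : 3 / 2 <= M -> - 1 / 2 <= d <= 1 / 2 ->
  cos (PI * d) ^ 2 * (M ^ 2 + d ^ 2) * M ^ 2 <= (M ^ 2 - d ^ 2) ^ 2.
Proof.
  intros HM Hd; pose proof PI_sqr_bounds.
  pose proof (cos_pi_sq_le_taylor d Hd) as Hc.
  set (c := cos (PI * d) ^ 2) in *; set (P := PI ^ 2) in *; set (u := d ^ 2) in *.
  set (w := M ^ 2).
  assert (Hu : 0 <= u <= 1 / 4) by (unfold u; simpl; nra).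
  assert (Hw : 9 / 4 <= w) by (unfold w; simpl; nra).
  assert (Hc0 : 0 <= c) by apply pow2_ge_0.
  assert (0.58 <= 1 - P * u / 6) by nra.
  set (k := P * (1 - P * u / 6) ^ 2) in *.
  assert (3.2 <= k) by (unfold k; nra).
  assert (c <= 1 - k * u) by (unfold k in *; nra).
  assert (c * ((w + u) * w) <= (1 - k * u) * ((w + u) * w))
    by (apply Rmult_le_compat_r; nra).
  assert (3 - k * w <= 0) by nra.
  assert (u * w * (3 - k * w) <= 0) by (assert (0 <= u * w) by nra; nra).
  assert (0 <= k * u * u * w) by (apply Rmult_le_pos; [| lra]; apply Rmult_le_pos; nra).
  nra.
Qed.

Lemma h_0 : h 0 = 1.
Proof. unfold h; destruct (Req_EM_T 0 0); [reflexivity | contradiction]. Qed.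

Lemma h_opp x : h (- x) = h x.
Proof.
  unfold h; destruct (Req_EM_T (- x) 0), (Req_EM_T x 0); try (reflexivity || lra).
  pose proof PI_RGT_0.
  rewrite Ropp_mult_distr_r_reverse, sin_neg; f_equal; field; split; lra.
Qed.

Lemma h_nonneg x : 0 <= h x.
Proof. unfold h; destruct (Req_EM_T x 0); [lra | apply pow2_ge_0]. Qed.

Lemma sin_pi_half_int_sq n d : sin (PI * (INR n + 1 / 2 + d)) ^ 2 = cos (PI * d) ^ 2.
Proof.
  induction n as [| n IH].
  - replace (PI * (INR 0 + 1 / 2 + d)) with (PI / 2 + PI * d) by (simpl; field).
    rewrite <- cos_sin; reflexivity.
  - rewrite S_INR.
    replace (PI * (INR n + 1 + 1 / 2 + d)) with (PI * (INR n + 1 / 2 + d) + PI) by ring.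
    rewrite neg_sin, <- IH; ring.
Qed.

Lemma h_half_int n d : INR n + 1 / 2 + d <> 0 ->
  h (INR n + 1 / 2 + d) = cos (PI * d) ^ 2 / (PI ^ 2 * (INR n + 1 / 2 + d) ^ 2).
Proof.
  intros Hnz; pose proof PI_RGT_0.
  unfold h; destruct (Req_EM_T (INR n + 1 / 2 + d) 0); [contradiction |].
  rewrite <- (sin_pi_half_int_sq n d); field; split; lra.
Qed.

Lemma h_half_int_0 n : h (INR n + 1 / 2) = / (PI ^ 2 * (INR n + 1 / 2) ^ 2).
Proof.
  pose proof (pos_INR n).
  rewrite <- (Rplus_0_r (INR n + 1 / 2)), h_half_int by lra.
  rewrite Rmult_0_r, cos_0; field; pose proof PI_RGT_0; split; lra.
Qed.

Lemma h_half_int_pos n : 0 < h (INR n + 1 / 2).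
Proof.
  rewrite h_half_int_0; pose proof (pos_INR n); pose proof PI_RGT_0.
  apply Rinv_0_lt_compat, Rmult_lt_0_compat; apply pow_lt; lra.
Qed.

Lemma h_1 : h 1 = 0.
Proof.
  replace 1 with (INR 0 + 1 / 2 + 1 / 2) by (simpl; field).
  rewrite h_half_int by (simpl; lra).
  replace (PI * (1 / 2)) with (PI / 2) by field; rewrite cos_PI2; unfold Rdiv; ring.
Qed.

Lemma h_pair_excess n d : INR n + 1 / 2 + d <> 0 -> INR n + 1 / 2 - d <> 0 ->
  let M := INR n + 1 / 2 in
  h (M + d) + h (M - d) - (h M + h M)
  = 2 * (cos (PI * d) ^ 2 * (M ^ 2 + d ^ 2) * M ^ 2 - (M ^ 2 - d ^ 2) ^ 2)
    / (PI ^ 2 * M ^ 2 * (M ^ 2 - d ^ 2) ^ 2).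
Proof.
  intros Hp Hm M; unfold M; pose proof PI_RGT_0; pose proof (pos_INR n).
  replace (h (INR n + 1 / 2 - d)) with (h (INR n + 1 / 2 + - d)) by (f_equal; ring).
  rewrite !h_half_int, h_half_int_0 by lra.
  rewrite Ropp_mult_distr_r_reverse, cos_neg.
  field; repeat split; try lra.
  intros Hz; apply Hp; nra.
Qed.

Lemma h_pair_excess_denom_pos n d : INR n + 1 / 2 + d <> 0 -> INR n + 1 / 2 - d <> 0 ->
  0 < PI ^ 2 * (INR n + 1 / 2) ^ 2 * ((INR n + 1 / 2) ^ 2 - d ^ 2) ^ 2.
Proof.
  intros Hp Hm; pose proof PI_RGT_0; pose proof (pos_INR n).
  assert ((INR n + 1 / 2) ^ 2 - d ^ 2 <> 0).
  { replace ((INR n + 1 / 2) ^ 2 - d ^ 2) with ((INR n + 1 / 2 + d) * (INR n + 1 / 2 - d))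
      by ring.
    apply Rmult_integral_contrapositive; tauto. }
  apply Rmult_lt_0_compat; [apply Rmult_lt_0_compat; apply pow_lt; lra |].
  rewrite <- Rsqr_pow2; apply Rsqr_pos_lt; assumption.
Qed.

Lemma h_pair_sum_ge n d : INR n + 1 / 2 + d <> 0 -> INR n + 1 / 2 - d <> 0 ->
  let M := INR n + 1 / 2 in
  (M ^ 2 - d ^ 2) ^ 2 <= cos (PI * d) ^ 2 * (M ^ 2 + d ^ 2) * M ^ 2 ->
  h M + h M <= h (M + d) + h (M - d).
Proof.
  intros Hp Hm M Hnum.
  pose proof (h_pair_excess n d Hp Hm) as He.
  pose proof (h_pair_excess_denom_pos n d Hp Hm) as Hden.
  cbv zeta in He; fold M in He; fold M in Hden.
  enough (0 <= h (M + d) + h (M - d) - (h M + h M)) by lra.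
  rewrite He; unfold Rdiv; apply Rmult_le_pos; [lra | left; apply Rinv_0_lt_compat; lra].
Qed.

Lemma h_pair_sum_le n d : INR n + 1 / 2 + d <> 0 -> INR n + 1 / 2 - d <> 0 ->
  let M := INR n + 1 / 2 in
  cos (PI * d) ^ 2 * (M ^ 2 + d ^ 2) * M ^ 2 <= (M ^ 2 - d ^ 2) ^ 2 ->
  h (M + d) + h (M - d) <= h M + h M.
Proof.
  intros Hp Hm M Hnum.
  pose proof (h_pair_excess n d Hp Hm) as He.
  pose proof (h_pair_excess_denom_pos n d Hp Hm) as Hden.
  cbv zeta in He; fold M in He; fold M in Hden.
  enough (h (M + d) + h (M - d) - (h M + h M) <= 0) by lra.
  rewrite He; unfold Rdiv; apply Rmult_le_0_r; [lra | left; apply Rinv_0_lt_compat; lra].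
Qed.

Lemma h_half : h (1 / 2) = 4 / PI ^ 2.
Proof.
  replace (1 / 2) with (INR 0 + 1 / 2) by (simpl; ring).
  rewrite h_half_int_0; simpl; field; pose proof PI_RGT_0; lra.
Qed.

Lemma h_half_pos : 0 < h (1 / 2).
Proof. rewrite h_half; apply Rdiv_lt_0_compat; [lra | apply pow_lt, PI_RGT_0]. Qed.

Lemma h_sum_ge_at_half d : - 1 / 2 <= d <= 1 / 2 ->
  h (1 / 2) + h (1 / 2) <= h (1 / 2 + d) + h (1 / 2 - d).
Proof.
  intros Hd.
  assert (Hends : h (1 / 2) + h (1 / 2) <= h 0 + h 1).
  { rewrite h_half, h_0, h_1; pose proof PI_sqr_bounds; pose proof PI_RGT_0.
    apply (Rmult_le_reg_r (PI ^ 2)); [lra |].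
    replace ((4 / PI ^ 2 + 4 / PI ^ 2) * PI ^ 2) with 8 by (field; lra); lra. }
  destruct (Req_dec d (1 / 2)) as [-> | Hd1].
  { replace (1 / 2 + 1 / 2) with 1 by field; rewrite Rminus_diag; lra. }
  destruct (Req_dec d (- 1 / 2)) as [-> | Hd2].
  { replace (1 / 2 + - 1 / 2) with 0 by field; replace (1 / 2 - - 1 / 2) with 1 by field; lra. }
  replace (1 / 2) with (INR 0 + 1 / 2) by (simpl; ring).
  apply h_pair_sum_ge; simpl; try lra.
  pose proof (cos_pi_sq_pair_ge d Hd); nra.
Qed.

Lemma h_pair_sum_le_half_int m d : (1 <= m)%nat -> - 1 / 2 <= d <= 1 / 2 ->
  h (INR m + 1 / 2 + d) + h (INR m + 1 / 2 - d) <= h (INR m + 1 / 2) + h (INR m + 1 / 2).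
Proof.
  intros Hm Hd; apply le_INR in Hm; simpl in Hm.
  apply h_pair_sum_le; try lra.
  apply cos_pi_sq_pair_le; lra.
Qed.

Lemma h_prod_le_at_half d : - 1 / 2 <= d <= 1 / 2 ->
  h (1 / 2 + d) * h (1 / 2 - d) <= h (1 / 2) * h (1 / 2).
Proof.
  intros Hd; pose proof PI_RGT_0.
  assert (Hsq : 0 <= h (1 / 2) * h (1 / 2)) by (apply Rmult_le_pos; apply h_nonneg).
  destruct (Req_dec d (1 / 2)) as [-> | Hd1].
  { replace (1 / 2 + 1 / 2) with 1 by field; rewrite h_1; lra. }
  destruct (Req_dec d (- 1 / 2)) as [-> | Hd2].
  { replace (1 / 2 - - 1 / 2) with 1 by field; rewrite h_1; lra. }
  set (q := (1 / 2 + d) * (1 / 2 - d)).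
  assert (Hq : 0 < q) by (unfold q; apply Rmult_lt_0_compat; lra).
  assert (Hprod : h (1 / 2 + d) * h (1 / 2 - d) = (cos (PI * d) ^ 2 / (PI ^ 2 * q)) ^ 2).
  { replace (1 / 2 + d) with (INR 0 + 1 / 2 + d) by (simpl; ring).
    replace (1 / 2 - d) with (INR 0 + 1 / 2 + - d) by (simpl; ring).
    rewrite !h_half_int by (simpl; lra).
    rewrite Ropp_mult_distr_r_reverse, cos_neg.
    unfold q; simpl; field; repeat split; lra. }
  rewrite Hprod, h_half, <- Rsqr_pow2, <- Rsqr_def.
  pose proof (cos_pi_sq_le_parabola d Hd) as Hc.
  apply Rsqr_incr_1.
  - replace (4 / PI ^ 2) with (4 * q / (PI ^ 2 * q)) by (field; lra).
    unfold Rdiv; apply Rmult_le_compat_r.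
    + left; apply Rinv_0_lt_compat, Rmult_lt_0_compat; [apply pow_lt |]; lra.
    + unfold q; nra.
  - apply Rmult_le_pos; [apply pow2_ge_0 |].
    left; apply Rinv_0_lt_compat, Rmult_lt_0_compat; [apply pow_lt |]; lra.
  - apply Rmult_le_pos; [lra |]; left; apply Rinv_0_lt_compat, pow_lt; lra.
Qed.

Lemma exp_le x y : x <= y -> exp x <= exp y.
Proof. intros [Hlt | ->]; [now left; apply exp_increasing | lra]. Qed.

Lemma exp_ge_bernoulli r v : 1 <= r -> 1 + r * (exp v - 1) <= exp (r * v).
Proof.
  intros Hr.
  set (k := fun v => exp (r * v) - r * exp v).
  set (dk := fun c => r * (exp (r * c) - exp c)).
  assert (Hk : forall c, is_derive k c (dk c)).
  { intros c; unfold k, dk; auto_derive; [easy | ring]. }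
  destruct (MVT_gen k 0 v dk) as (c & Hc & Hmvt).
  - intros c _; apply Hk.
  - intros c _; apply continuity_pt_filterlim, (ex_derive_continuous (V := R_NormedModule) k).
    eexists; apply Hk.
  - (* [c] lies between [0] and [v], so [dk c] has the sign of [v] *)
    assert (Hsign : 0 <= dk c * (v - 0)).
    { unfold dk, Rmin, Rmax in *; destruct (Rle_dec 0 v).
      - assert (exp c <= exp (r * c)) by (apply exp_le; nra).
        apply Rmult_le_pos; [apply Rmult_le_pos |]; lra.
      - assert (exp (r * c) <= exp c) by (apply exp_le; nra).
        assert (0 <= r * (exp c - exp (r * c)) * (0 - v))
          by (apply Rmult_le_pos; [apply Rmult_le_pos |]; lra).
        lra. }
    unfold k in Hmvt; rewrite Rmult_0_r, exp_0 in Hmvt; lra.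
Qed.

Lemma Rpower_ge_bernoulli t r : 1 <= r -> 0 < t -> 1 + r * (t - 1) <= Rpower t r.
Proof.
  intros Hr Ht; unfold Rpower.
  rewrite <- (exp_ln t) at 1 by exact Ht; apply exp_ge_bernoulli, Hr.
Qed.

Lemma Rpower_le_bernoulli t e : 0 <= e <= 1 -> 0 < t -> Rpower t e <= 1 + e * (t - 1).
Proof.
  intros He Ht; destruct (Req_dec e 0) as [-> | He0].
  - rewrite Rpower_O by exact Ht; lra.
  - assert (Hinv : 1 <= / e).
    { rewrite <- Rinv_1; apply Rinv_le_contravar; lra. }
    pose proof (Rpower_ge_bernoulli (Rpower t e) (/ e) Hinv (exp_pos _)) as Hb.
    rewrite Rpower_mult, Rinv_r, Rpower_1 in Hb by lra.
    apply (Rmult_le_compat_l e) in Hb; [| lra].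
    replace (e * (1 + / e * (Rpower t e - 1))) with (e + Rpower t e - 1) in Hb
      by (field; exact He0).
    lra.
Qed.

Lemma Rpower_exp t r : Rpower (exp t) r = exp (r * t).
Proof. unfold Rpower; rewrite ln_exp; reflexivity. Qed.

Lemma Rpower_div a b r : 0 < a -> 0 < b -> Rpower (a / b) r = Rpower a r / Rpower b r.
Proof.
  intros Ha Hb; unfold Rpower, Rdiv.
  rewrite ln_mult, ln_Rinv, <- exp_Ropp, <- exp_plus by (auto with real).
  f_equal; ring.
Qed.

Lemma Rpower_midpoint_le a b r : 1 <= r -> 0 < a -> 0 < b ->
  2 * Rpower ((a + b) / 2) r <= Rpower a r + Rpower b r.
Proof.
  intros Hr Ha Hb; set (m := (a + b) / 2).
  assert (Hm : 0 < m) by (unfold m; lra).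
  pose proof (Rpower_ge_bernoulli (a / m) r Hr (Rdiv_lt_0_compat a m Ha Hm)) as Hba.
  pose proof (Rpower_ge_bernoulli (b / m) r Hr (Rdiv_lt_0_compat b m Hb Hm)) as Hbb.
  rewrite Rpower_div in Hba, Hbb by assumption.
  assert (Hsum : a / m + b / m = 2) by (unfold m; field; lra).
  assert (Hpm : 0 < Rpower m r) by apply exp_pos.
  assert (H2 : 2 <= (Rpower a r + Rpower b r) / Rpower m r).
  { unfold Rdiv in *; rewrite Rmult_plus_distr_r; nra. }
  apply (Rmult_le_compat_r (Rpower m r)) in H2; [| lra].
  unfold Rdiv in H2; rewrite Rmult_assoc, Rinv_l, Rmult_1_r in H2 by lra.
  exact H2.
Qed.

Lemma rpow_pos a r : 0 < a -> rpow a r = Rpower a r.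
Proof. intros Ha; unfold rpow; destruct (Req_EM_T a 0); [lra | reflexivity]. Qed.

Lemma rpow_0 r : rpow 0 r = 0.
Proof. unfold rpow; destruct (Req_EM_T 0 0); [reflexivity | contradiction]. Qed.

Lemma rpow_rpow_inv a r : r <> 0 -> 0 <= a -> rpow (rpow a r) (/ r) = a.
Proof.
  intros Hr Ha; destruct (Req_dec a 0) as [-> | Ha0]; [now rewrite !rpow_0 |].
  rewrite (rpow_pos a), rpow_pos by (try apply exp_pos; lra).
  rewrite Rpower_mult, Rinv_r, Rpower_1 by lra; reflexivity.
Qed.

Lemma Rpower_2_ge r : 1 <= r -> 2 <= Rpower 2 r.
Proof. intros Hr; rewrite <- (Rpower_1 2) at 1 by lra; apply Rle_Rpower; lra. Qed.

Lemma Rpower_2_inv_le r : 1 <= r -> Rpower 2 (/ r) <= 2.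
Proof.
  intros Hr; rewrite <- (Rpower_1 2) at 2 by lra; apply Rle_Rpower; [lra |].
  rewrite <- Rinv_1; apply Rinv_le_contravar; lra.
Qed.

Lemma rpow_sum_excess_le a b c r : 1 <= r -> 0 <= a -> 0 <= b -> 0 < c -> a + b <= c + c ->
  rpow (a + b) r - rpow a r - rpow b r <= rpow (c + c) r - rpow c r - rpow c r.
Proof.
  intros Hr Ha Hb Hc Habc.
  set (k := / Rpower 2 r).
  assert (Hk : 0 < k <= 1 / 2).
  { pose proof (Rpower_2_ge r Hr); unfold k; split.
    - apply Rinv_0_lt_compat; lra.
    - unfold Rdiv; rewrite Rmult_1_l; apply Rinv_le_contravar; lra. }
  assert (Hhalf : forall s, 0 < s -> Rpower (s / 2) r = Rpower s r * k)
    by (intros s Hs; rewrite Rpower_div by lra; reflexivity).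
  assert (Hrhs : rpow (c + c) r - rpow c r - rpow c r = (1 - 2 * k) * Rpower (c + c) r).
  { rewrite !rpow_pos by lra.
    replace c with ((c + c) / 2) at 3 4 by field; rewrite Hhalf by lra; ring. }
  assert (Hrhs_ge0 : 0 <= (1 - 2 * k) * Rpower (c + c) r)
    by (apply Rmult_le_pos; [lra | left; apply exp_pos]).
  rewrite Hrhs.
  destruct (Req_dec a 0) as [-> | Ha0].
  { rewrite Rplus_0_l, rpow_0; lra. }
  destruct (Req_dec b 0) as [-> | Hb0].
  { rewrite Rplus_0_r, rpow_0; lra. }
  rewrite !rpow_pos by lra.
  pose proof (Rpower_midpoint_le a b r Hr ltac:(lra) ltac:(lra)) as Hmean.
  rewrite Hhalf in Hmean by lra.
  assert (Hmono : Rpower (a + b) r <= Rpower (c + c) r)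
    by (apply Rle_Rpower_l; lra).
  nra.
Qed.

(* [e^y + e^-y - (e^(r y) + e^(-r y))^(1/r)], with [e^y] factored out of the r-norm *)
Definition rnorm_defect (r y : R) : R :=
  exp y + exp (- y) - exp y * Rpower (1 + exp (-2 * r * y)) (/ r).

Definition rnorm_defect_deriv (r y : R) : R :=
  exp y - exp (- y)
  - exp y * Rpower (1 + exp (-2 * r * y)) (/ r) * (1 - exp (-2 * r * y)) / (1 + exp (-2 * r * y)).

Lemma is_derive_rnorm_defect r y : r <> 0 ->
  is_derive (rnorm_defect r) y (rnorm_defect_deriv r y).
Proof.
  intros Hr; unfold rnorm_defect, rnorm_defect_deriv, Rpower.
  pose proof (exp_pos (-2 * r * y)).
  auto_derive; [lra | field; lra].
Qed.

Lemma rnorm_defect_deriv_nonpos r y : 1 <= r -> 0 <= y -> rnorm_defect_deriv r y <= 0.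
Proof.
  intros Hr Hy; unfold rnorm_defect_deriv.
  set (Z := exp (-2 * r * y)); set (z := exp (-2 * y)); set (e := 1 - / r).
  assert (HZ : 0 < Z) by apply exp_pos.
  assert (Hz : 1 - 2 * y <= z <= 1).
  { pose proof (exp_ineq1_le (-2 * y)) as Hlin; fold z in Hlin.
    split; [lra | unfold z; rewrite <- exp_0; apply exp_le; lra]. }
  assert (Hrinv : 0 < / r <= 1).
  { split; [apply Rinv_0_lt_compat; lra | rewrite <- Rinv_1; apply Rinv_le_contravar; lra]. }
  assert (He : 0 <= e <= 1) by (unfold e; lra).
  assert (Her : e <= r - 1).
  { assert (r * / r = 1) by (field; lra).
    assert (0 <= (r - 1) * (1 - / r)) by (apply Rmult_le_pos; lra).
    unfold e; nra. }
  (* [Z = z * exp (-2 (r-1) y)], and [exp (2 (r-1) y)] beats [1 + e (1 - z)] *)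
  assert (Hkey : Z * (1 + e * (1 - z)) <= z).
  { assert (HZz : Z = z * exp (-2 * (r - 1) * y))
      by (unfold Z, z; rewrite <- exp_plus; f_equal; ring).
    assert (Hinv : exp (-2 * (r - 1) * y) * exp (2 * (r - 1) * y) = 1)
      by (rewrite <- exp_plus, <- exp_0; f_equal; ring).
    assert (Hgrow : 1 + e * (1 - z) <= exp (2 * (r - 1) * y)).
    { pose proof (exp_ineq1_le (2 * (r - 1) * y)).
      assert (e * (1 - z) <= (r - 1) * (2 * y)) by (apply Rmult_le_compat; lra).
      lra. }
    pose proof (exp_pos (-2 * (r - 1) * y)).
    rewrite HZz; nra. }
  (* with [X = (1+Z)^e], the derivative is [e^y ((1 - Z) - X (1 - z)) / X] *)
  set (X := Rpower (1 + Z) e).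
  assert (HX : 0 < X <= 1 + e * Z).
  { split; [apply exp_pos |].
    pose proof (Rpower_le_bernoulli (1 + Z) e He ltac:(lra)); unfold X; lra. }
  assert (Hsplit : Rpower (1 + Z) (/ r) = (1 + Z) / X).
  { replace (/ r) with (1 + - e) by (unfold e; ring).
    rewrite Rpower_plus, Rpower_Ropp, Rpower_1 by lra; reflexivity. }
  assert (Hey : exp (- y) = exp y * z)
    by (unfold z; rewrite <- exp_plus; f_equal; ring).
  rewrite Hsplit, Hey.
  replace (exp y - exp y * z - exp y * ((1 + Z) / X) * (1 - Z) / (1 + Z))
    with (exp y * (X * (1 - z) - (1 - Z)) / X) by (field; lra).
  assert (X * (1 - z) <= 1 - Z)
    by (apply Rle_trans with ((1 + e * Z) * (1 - z)); [apply Rmult_le_compat_r |]; nra).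
  apply Rmult_le_0_r; [| left; apply Rinv_0_lt_compat; lra].
  apply Rmult_le_0_l; [left; apply exp_pos | lra].
Qed.

Lemma rnorm_defect_le r y : 1 <= r -> 0 <= y -> rnorm_defect r y <= 2 - Rpower 2 (/ r).
Proof.
  intros Hr Hy.
  destruct (MVT_gen (rnorm_defect r) 0 y (rnorm_defect_deriv r)) as (c & Hc & Hmvt).
  - intros c _; apply is_derive_rnorm_defect; lra.
  - intros c _; apply continuity_pt_filterlim, (ex_derive_continuous (V := R_NormedModule)).
    eexists; apply is_derive_rnorm_defect; lra.
  - unfold Rmin, Rmax in Hc; destruct (Rle_dec 0 y); [| lra].
    pose proof (rnorm_defect_deriv_nonpos r c Hr ltac:(lra)) as HD.
    assert (Hdef0 : rnorm_defect r 0 = 2 - Rpower 2 (/ r)).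
    { unfold rnorm_defect; rewrite !Rmult_0_r, Ropp_0, exp_0; ring_simplify; reflexivity. }
    assert (rnorm_defect_deriv r c * (y - 0) <= 0) by (apply Rmult_le_0_r; [exact HD | lra]).
    lra.
Qed.

Lemma exp_sum_sub_rnorm_le r al be : 1 <= r -> be <= al ->
  exp al + exp be - Rpower (Rpower (exp al) r + Rpower (exp be) r) (/ r)
  <= (2 - Rpower 2 (/ r)) * exp ((al + be) / 2).
Proof.
  intros Hr Hab.
  set (mu := (al + be) / 2); set (y := (al - be) / 2).
  replace al with (mu + y) by (unfold mu, y; field).
  replace be with (mu + - y) by (unfold mu, y; field).
  replace ((mu + y + (mu + - y)) / 2) with mu by field.
  assert (HZ : 0 < 1 + exp (-2 * r * y)) by (pose proof (exp_pos (-2 * r * y)); lra).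
  assert (Hsum : Rpower (exp (mu + y)) r + Rpower (exp (mu + - y)) r
                 = exp (r * (mu + y)) * (1 + exp (-2 * r * y))).
  { rewrite !Rpower_exp.
    replace (exp (r * (mu + - y))) with (exp (r * (mu + y)) * exp (-2 * r * y))
      by (rewrite <- exp_plus; f_equal; ring).
    ring. }
  rewrite Hsum; unfold Rpower at 1.
  rewrite ln_mult, ln_exp, Rmult_plus_distr_l, exp_plus by (try apply exp_pos; lra).
  replace (/ r * (r * (mu + y))) with (mu + y) by (field; lra).
  pose proof (rnorm_defect_le r y Hr ltac:(unfold y; lra)) as Hdef.
  unfold rnorm_defect in Hdef.
  rewrite !exp_plus.
  pose proof (exp_pos mu).
  fold (Rpower (1 + exp (-2 * r * y)) (/ r)).
  nra.
Qed.

Lemma rpow_sum_sub_rnorm_le a b r : 1 <= r -> 0 <= a -> 0 <= b ->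
  a + b - rpow (rpow a r + rpow b r) (/ r) <= (2 - Rpower 2 (/ r)) * sqrt (a * b).
Proof.
  intros Hr Ha Hb.
  pose proof (Rpower_2_inv_le r Hr) as H2.
  destruct (Req_dec a 0) as [-> | Ha0].
  { rewrite rpow_0, Rplus_0_l, Rplus_0_l, rpow_rpow_inv, Rmult_0_l, sqrt_0 by lra; lra. }
  destruct (Req_dec b 0) as [-> | Hb0].
  { rewrite rpow_0, !Rplus_0_r, rpow_rpow_inv, Rmult_0_r, sqrt_0 by lra; lra. }
  rewrite (rpow_pos a), (rpow_pos b), rpow_pos
    by (try (apply Rplus_lt_0_compat; apply exp_pos); lra).
  rewrite <- (exp_ln a), <- (exp_ln b) by lra.
  replace (exp (ln a) * exp (ln b)) with (exp ((ln a + ln b) / 2) * exp ((ln a + ln b) / 2))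
    by (rewrite <- !exp_plus; f_equal; field).
  rewrite sqrt_square by (left; apply exp_pos).
  destruct (Rle_dec (ln b) (ln a)).
  - apply exp_sum_sub_rnorm_le; assumption.
  - rewrite (Rplus_comm (exp (ln a))), (Rplus_comm (Rpower (exp (ln a)) r)), (Rplus_comm (ln a)).
    apply exp_sum_sub_rnorm_le; lra.
Qed.

Lemma rpow_sum_sub_rnorm_diag c r : 1 <= r -> 0 < c ->
  c + c - rpow (rpow c r + rpow c r) (/ r) = (2 - Rpower 2 (/ r)) * c.
Proof.
  intros Hr Hc.
  assert (Hcr : 0 < Rpower c r) by apply exp_pos.
  rewrite (rpow_pos c), rpow_pos by lra.
  replace (Rpower c r + Rpower c r) with (2 * Rpower c r) by ring.
  rewrite <- Rpower_mult_distr, Rpower_mult, Rinv_r, Rpower_1 by lra; ring.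
Qed.

Lemma is_global_min_on01_at_half (f : R -> R) :
  (forall d, - 1 / 2 <= d <= 1 / 2 -> f (1 / 2 + 0) <= f (1 / 2 + d)) ->
  is_global_min_on01 f (1 / 2).
Proof.
  intros Hf; split; [lra |]; intros x Hx.
  replace x with (1 / 2 + (x - 1 / 2)) by ring.
  replace (f (1 / 2)) with (f (1 / 2 + 0)) by (f_equal; ring).
  apply Hf; lra.
Qed.

Lemma is_global_max_on01_at_half (f : R -> R) :
  (forall d, - 1 / 2 <= d <= 1 / 2 -> f (1 / 2 + d) <= f (1 / 2 + 0)) ->
  is_global_max_on01 f (1 / 2).
Proof.
  intros Hf; split; [lra |]; intros x Hx.
  replace x with (1 / 2 + (x - 1 / 2)) by ring.
  replace (f (1 / 2)) with (f (1 / 2 + 0)) by (f_equal; ring).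
  apply Hf; lra.
Qed.

Lemma h_half_add_sub_one d : h (1 / 2 + d - 1) = h (1 / 2 - d).
Proof. replace (1 / 2 + d - 1) with (- (1 / 2 - d)) by lra; apply h_opp. Qed.

Lemma h_half_add_nat m d : h (1 / 2 + d + INR m) = h (INR m + 1 / 2 + d).
Proof. f_equal; ring. Qed.

Lemma h_half_add_sub_nat m d : h (1 / 2 + d - (INR m + 1)) = h (INR m + 1 / 2 - d).
Proof. replace (1 / 2 + d - (INR m + 1)) with (- (INR m + 1 / 2 - d)) by lra; apply h_opp. Qed.

Lemma sum_min_at_half : is_global_min_on01 (fun x => h x + h (x - 1)) (1 / 2).
Proof.
  apply is_global_min_on01_at_half; intros d Hd.
  rewrite !h_half_add_sub_one, Rplus_0_r, Rminus_0_r.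
  apply h_sum_ge_at_half, Hd.
Qed.

Lemma shifted_sum_max_at_half m : (1 <= m)%nat ->
  is_global_max_on01 (fun x => h (x + INR m) + h (x - (INR m + 1))) (1 / 2).
Proof.
  intros Hm; apply is_global_max_on01_at_half; intros d Hd.
  rewrite !h_half_add_nat, !h_half_add_sub_nat, Rplus_0_r, Rminus_0_r.
  apply h_pair_sum_le_half_int; assumption.
Qed.

Lemma sum_sub_rnorm_max_at_half r : 1 <= r ->
  is_global_max_on01
    (fun x => h x + h (x - 1) - rpow (rpow (h x) r + rpow (h (x - 1)) r) (/ r)) (1 / 2).
Proof.
  intros Hr; apply is_global_max_on01_at_half; intros d Hd.
  rewrite !h_half_add_sub_one, Rplus_0_r, Rminus_0_r.
  rewrite rpow_sum_sub_rnorm_diag by (apply Hr || apply h_half_pos).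
  eapply Rle_trans; [apply rpow_sum_sub_rnorm_le; [exact Hr | apply h_nonneg ..] |].
  apply Rmult_le_compat_l; [pose proof (Rpower_2_inv_le r Hr); lra |].
  rewrite <- (sqrt_square (h (1 / 2))) by apply h_nonneg.
  apply sqrt_le_1_alt, h_prod_le_at_half, Hd.
Qed.

Lemma sum_rpow_excess_max_at_half r m : 1 <= r -> (1 <= m)%nat ->
  is_global_max_on01
    (fun x => rpow (h (x + INR m) + h (x - (INR m + 1))) r
              - rpow (h (x + INR m)) r - rpow (h (x - (INR m + 1))) r) (1 / 2).
Proof.
  intros Hr Hm; apply is_global_max_on01_at_half; intros d Hd.
  rewrite !h_half_add_nat, !h_half_add_sub_nat, Rplus_0_r, Rminus_0_r.
  apply rpow_sum_excess_le; [exact Hr | apply h_nonneg | apply h_nonneg | apply h_half_int_pos |].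
  apply h_pair_sum_le_half_int; assumption.
Qed.

Theorem lemma5 (r : R) (hr : 1 <= r) :
  is_global_min_on01 (fun x => h x + h (x - 1)) (1/2)
  /\ (forall m : nat, (1 <= m)%nat ->
        is_global_max_on01 (fun x => h (x + INR m) + h (x - (INR m + 1))) (1/2))
  /\ is_global_max_on01
       (fun x => h x + h (x - 1) - rpow (rpow (h x) r + rpow (h (x - 1)) r) (/ r))
       (1/2)
  /\ (forall m : nat, (1 <= m)%nat ->
        is_global_max_on01
          (fun x => rpow (h (x + INR m) + h (x - (INR m + 1))) r
                    - rpow (h (x + INR m)) r - rpow (h (x - (INR m + 1))) r)
          (1/2)).
Proof.
  split; [exact sum_min_at_half |].
  split; [exact shifted_sum_max_at_half |].
  split; [exact (sum_sub_rnorm_max_at_half r hr) |].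
  intros m; exact (sum_rpow_excess_max_at_half r m hr).
Qed.
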